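(* Let $G=(V,E)$ be a finite simple undirected graph, let $0<p\le 1$, and let $T\subseteq V$ be a set maximizing $f_p(S)$ over all $S\subseteq V$. Then for every $v\in T$ we have $d_v(T)^p\ge f_p(T)/2$.
   Context: For $v\in V$, $N(v)=\{u\in V:(u,v)\in E\}$ (so $v\notin N(v)$). For $S\subseteq V$ and $v\in V$, $d_v(S)=|N(v)\cap S|$. For $p>0$ and nonempty $S\subseteq V$, $f_p(S)=\frac{1}{|S|}\sum_{v\in S}d_v(S)^p$ (with the convention $0^p=0$), and $f_p(\emptyset)=0$. *)

From mathcomp Require Import all_boot all_order all_algebra.
From mathcomp Require Import all_classical all_reals exp.
Set Implicit Arguments. Unset Strict Implicit. Unset Printing Implicit Defensive.
Import Order.TTheory GRing.Theory Num.Theory.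
Local Open Scope ring_scope.

Definition simple_graph (V : finType) (e : rel V) : Prop :=
  symmetric e /\ irreflexive e.

Definition deg_in (V : finType) (e : rel V) (v : V) (S : {set V}) : nat :=
  #|[set u in S | e u v]|.

(* f_p(S) = (1/|S|) sum_{v in S} d_v(S)^p, f_p(empty) = 0.
   powR 0 p = 0 for p <> 0, matching the convention 0^p = 0. *)
Definition fp (R : realType) (V : finType) (e : rel V) (p : R) (S : {set V}) : R :=
  if S == finset.set0 then 0
  else (#|S|%:R)^-1 * \sum_(v in S) powR (deg_in e v S)%:R p.

From mathcomp Require Import all_boot all_order all_algebra.
From mathcomp Require Import all_classical all_reals exp.
From mathcomp Require Import ring lra.
Import Order.TTheory GRing.Theory Num.Theory.
Local Open Scope ring_scope.

(* Let m be a vertex of minimum degree d in T.  Deleting m from T loses its own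
   term d^p and, for each of its d neighbours w, the increment
   d_w(T)^p - (d_w(T) - 1)^p, which by concavity of t^p is at most
   d_w(T)^(p-1) <= d^(p-1).  So the sum defining f_p drops by at most 2 d^p,
   while by maximality of T the average over T :\ m does not increase; this
   forces f_p(T) <= 2 d^p <= 2 d_v(T)^p for every v in T. *)

Section PowR.
Variable R : realType.
Implicit Types d p x : R.

Lemma powR_subr1_le_div {x p} : 1 <= x -> 0 < p -> p <= 1 ->
  powR x p - powR (x - 1) p <= powR x p / x.
Proof.
move=> x1 p0 p1; have x0 : 0 < x by apply: lt_le_trans x1.
set y := (x - 1) / x.
have y0 : 0 <= y by apply: divr_ge0; [rewrite subr_ge0 | exact: ltW].
have y1 : y <= 1 by rewrite ler_pdivrMr // mul1r lerBlDr lerDl.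
have y_le_powR : y <= powR y p.
  case: (ltrgt0P y) y0 => // [y_gt0 _|-> _]; last exact: powR_ge0.
  by apply: ger1_powR => //; rewrite y_gt0 y1.
have -> : x - 1 = y * x by rewrite /y mulfVK // gt_eqF.
rewrite powRM //; last exact: ltW.
have : y * powR x p <= powR y p * powR x p by rewrite ler_wpM2r // powR_ge0.
have -> : y * powR x p = powR x p - powR x p / x by rewrite /y; field; rewrite gt_eqF.
lra.
Qed.

Lemma powR_div_le d x p : 0 < d -> d <= x -> p <= 1 ->
  powR x p / x <= powR d p / d.
Proof.
move=> d0 dx p1; set z := x / d.
have z1 : 1 <= z by rewrite ler_pdivlMr // mul1r.
have z0 : 0 < z by apply: lt_le_trans z1.
have -> : x = z * d by rewrite /z mulfVK // gt_eqF.
rewrite powRM; [|exact: ltW|exact: ltW].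
rewrite invfM mulrACA; apply: ler_piMl.
  by apply: divr_ge0; [exact: powR_ge0 | exact: ltW].
by rewrite ler_pdivrMr // mul1r; exact: ler1_powR.
Qed.

Lemma powR_subr1_le d x p : 1 <= d -> d <= x -> 0 < p -> p <= 1 ->
  powR x p - powR (x - 1) p <= powR d p / d.
Proof.
move=> d1 dx p0 p1; have x1 : 1 <= x by exact: le_trans dx.
apply: le_trans (powR_subr1_le_div x1 p0 p1) _.
by apply: powR_div_le => //; apply: lt_le_trans d1.
Qed.

Lemma mean_le_of_mean_setD1_le (F : realFieldType) (n : nat) (a b c : F) :
  (0 < n)%N -> n%:R^-1 * b <= n.+1%:R^-1 * a -> a - b <= c ->
  n.+1%:R^-1 * a <= c.
Proof.
move=> n0 b_le a_le; rewrite -natr1 in b_le *.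
have N_gt0 : 0 < n%:R :> F by rewrite ltr0n.
set N := n%:R in b_le N_gt0 *; set A := (N + 1)^-1 * a.
have a_eq : a = N * A + A by rewrite /A; field; rewrite gt_eqF // ltr_wpDl.
have b_le_NA : b <= N * A.
  by rewrite -ler_pdivrMl // mulrC; apply: le_trans b_le _; rewrite /A.
lra.
Qed.

End PowR.

Section RemoveVertex.
Variables (V : finType) (e : rel V).
Hypotheses (e_sym : symmetric e) (e_irr : irreflexive e).

Lemma deg_in_setD1 {T : {set V}} {m} w : m \in T ->
  deg_in e w T = (deg_in e w (T :\ m) + e m w)%N.
Proof.
move=> mT; rewrite /deg_in (cardsD1 m [set u in T | e u w]) !inE mT /= addnC.
by congr (_ + _)%N; apply: eq_card => u; rewrite !inE andbA.
Qed.

Lemma deg_in_setD1_self (T : {set V}) m : deg_in e m (T :\ m) = deg_in e m T.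
Proof.
apply: eq_card => u; rewrite !inE.
by case: (eqVneq u m) => [->|]; rewrite ?e_irr ?andbF.
Qed.

Variables (R : realType) (p : R).
Hypotheses (p_gt0 : 0 < p) (p_le1 : p <= 1).

Let sum_pow_deg (S : {set V}) := \sum_(w in S) powR (deg_in e w S)%:R p.

Lemma sum_pow_deg_setD1_le (T : {set V}) m : m \in T ->
  (forall w, w \in T -> deg_in e m T <= deg_in e w T)%N ->
  sum_pow_deg T - sum_pow_deg (T :\ m) <= 2 * powR (deg_in e m T)%:R p.
Proof.
move=> mT m_min; set d := deg_in e m T; set c := powR d%:R p / d%:R.
rewrite /sum_pow_deg (big_setD1 m mT) /= -addrA mulr_natl mulr2n lerD2l -sumrB.
have increment_le w : w \in T :\ m ->
    powR (deg_in e w T)%:R p - powR (deg_in e w (T :\ m))%:R p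
      <= if e w m then c else 0.
  move=> /setD1P[_ wT]; rewrite (deg_in_setD1 w mT) (e_sym m w).
  case: (boolP (e w m)) => ewm; last by rewrite addn0 subrr.
  have d_ge1 : (1 <= d)%N.
    by rewrite lt0n cards_eq0; apply/set0Pn; exists w; rewrite inE wT.
  have degS : deg_in e w T = (deg_in e w (T :\ m)).+1.
    by rewrite (deg_in_setD1 w mT) (e_sym m w) ewm addn1.
  have := @powR_subr1_le R d%:R (deg_in e w (T :\ m)).+1%:R p.
  rewrite addn1 -natr1 addrK; apply => //; first by rewrite ler1n.
  by rewrite natr1 -degS ler_nat m_min.
apply: (@le_trans _ _ (\sum_(w in T :\ m) if e w m then c else 0)).
  exact: ler_sum.
rewrite -big_mkcondr -big_set sumr_const -[#|_|]/(deg_in e m (T :\ m)).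
rewrite deg_in_setD1_self -/d -[_ *+ d]mulr_natr /c.
case: (posnP d) => [->|d_gt0]; first by rewrite mulr0 powR_ge0.
by rewrite divfK // pnatr_eq0 -lt0n.
Qed.

End RemoveVertex.

Theorem lemma4 (R : realType) (V : finType) (e : rel V) (p : R) (T : {set V}) :
  simple_graph e -> 0 < p -> p <= 1 ->
  (forall S : {set V}, fp e p S <= fp e p T) ->
  forall v, v \in T -> powR (deg_in e v T)%:R p >= fp e p T / 2.
Proof.
move=> [e_sym e_irr] p_gt0 p_le1 T_max v vT.
have [m mT m_min] := arg_minnP (fun w => deg_in e w T) vT.
have {}mT : m \in T by [].
set d := deg_in e m T.
suff fpT_le : fp e p T <= 2 * powR d%:R p.
  rewrite ler_pdivrMr // mulrC; apply: le_trans fpT_le _.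
  rewrite ler_pM2l //; apply: ge0_ler_powR; rewrite ?nnegrE ?ler0n ?ler_nat //.
    exact: ltW.
  by apply: m_min.
have T_neq0 : T != finset.set0 by apply/set0Pn; exists m.
have cardT : #|T| = #|T :\ m|.+1 by rewrite (cardsD1 m T) mT.
have [Tm0|Tm_neq0] := eqVneq (T :\ m) finset.set0.
  rewrite /fp (negPf T_neq0) cardT Tm0 cards0 invr1 mul1r (big_setD1 m mT) /=.
  rewrite Tm0 big_set0 addr0; have := powR_ge0 d%:R p; lra.
have := T_max (T :\ m); rewrite /fp (negPf T_neq0) (negPf Tm_neq0) cardT.
move/mean_le_of_mean_setD1_le; apply; first by rewrite card_gt0.
exact: sum_pow_deg_setD1_le.
Qed.
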